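(* Let $X$ be a real Banach space with a normalized Schauder basis $\mathcal B=(e_n)_{n=1}^\infty$ with biorthogonal functionals $(e_n^* )$, let $\mathcal E=(\varepsilon_n)_{n=1}^\infty$ be a sequence of nonnegative numbers, and let $K=K_{\mathcal B,\mathcal E}$. If $r^{\rm ext}(K)<\infty$, then $\|x\|\le r^{\rm ext}(K)$ for every $x\in K$.
   Context: The brick is $K_{\mathcal B,\mathcal E}=\{x\in X:\ |e_n^*(x)|\le\varepsilon_n \text{ for all } n\}$. A point $x_0\in A$ is an extreme point of $A$ if for every nonzero $x\in X$ there is $\lambda\in[-1,1]$ with $x_0+\lambda x\notin A$. The extreme radius $r^{\rm ext}(K)$ is the supremum of $\|x_0\|$ over extreme points $x_0$ of $K$ if an extreme point exists, and $\infty$ otherwise. *)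

From HB Require Import structures.
From mathcomp Require Import all_boot all_order all_algebra.
From mathcomp Require Import all_classical all_reals all_analysis.
Set Implicit Arguments. Unset Strict Implicit. Unset Printing Implicit Defensive.
Import Order.TTheory GRing.Theory Num.Theory.
Import numFieldNormedType.Exports.
Local Open Scope classical_set_scope.
Local Open Scope ring_scope.

Definition psum (R : realType) (X : normedModType R)
  (a : nat -> R) (e : nat -> X) : nat -> X :=
  fun N => \sum_(0 <= n < N) a n *: e n.

Definition schauder_basis (R : realType) (X : normedModType R) (e : nat -> X) :=
  forall x : X, exists! a : nat -> R, psum a e @ \oo --> x.

Definition normalized (R : realType) (X : normedModType R) (e : nat -> X) :=
  forall n, `|e n| = 1.

Definition biorthogonal_functionals (R : realType) (X : normedModType R)
  (e : nat -> X) (estar : nat -> X -> R) :=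
  forall x : X, psum (fun n => estar n x) e @ \oo --> x.

Definition brick (R : realType) (X : normedModType R)
  (estar : nat -> X -> R) (eps : nat -> R) : set X :=
  [set x | forall n, `|estar n x| <= eps n].

Definition extreme_point (R : realType) (X : normedModType R)
  (A : set X) (x0 : X) :=
  A x0 /\ forall x : X, x != 0 ->
    exists2 l : R, -1 <= l <= 1 & ~ A (x0 + l *: x).

Definition ext_radius (R : realType) (X : normedModType R) (A : set X) : \bar R :=
  if pselect (exists x0, extreme_point A x0)
  then ereal_sup [set (`|x0|)%:E | x0 in extreme_point A]
  else +oo%E.

From HB Require Import structures.
From mathcomp Require Import all_boot all_order all_algebra.
From mathcomp Require Import all_classical all_reals all_analysis.
From mathcomp Require Import lra ring.
Import Order.TTheory GRing.Theory Num.Theory.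
Import numFieldNormedType.Exports.
Local Open Scope classical_set_scope.
Local Open Scope ring_scope.

(* The extreme points of the brick are exactly the points lying on every
   face, |e_n^*(x)| = eps_n for all n.  Given such a point x0 and any x in
   the brick, the vector with coordinates e_n^*(x) for n < N and e_n^*(x0)
   for n >= N lies in the brick and tends to x.  Such a vector is bounded by
   the extreme radius by downward induction on the number of free
   coordinates: moving the coordinate N to +eps_N and to -eps_N gives two
   points with one free coordinate less, and the original point is a convex
   combination of them. *)

Lemma normr_convex_le {R : numFieldType} {V : normedModType R}
    {a b r : R} {u v y : V} :
  0 <= a -> 0 <= b -> 0 < a + b -> (a + b) *: y = a *: u + b *: v ->
  `|u| <= r -> `|v| <= r -> `|y| <= r.
Proof.
move=> a_ge0 b_ge0 ab_gt0 yE u_le v_le; rewrite -(ler_pM2l ab_gt0).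
have -> : (a + b) * `|y| = `|a *: u + b *: v| by rewrite -yE normrZ gtr0_norm.
rewrite (le_trans (ler_normD _ _)) // !normrZ !ger0_norm // mulrDl.
by rewrite lerD // ler_wpM2l.
Qed.

Lemma normr_lt_add_same_sign (R : realDomainType) (a c : R) :
  0 <= a * c -> c != 0 -> `|a| < `|a + c|.
Proof.
move=> ac_ge0 c_neq0.
have [a_ge0|a_lt0] := leP 0 a; have [c_gt0|c_le0] := ltP 0 c.
- by rewrite !ger0_norm //; lra.
- have c_lt0 : c < 0 by rewrite lt_neqAle c_neq0.
  have -> : a = 0 by apply/eqP; rewrite eq_le a_ge0 andbT; nra.
  by rewrite normr0 add0r normr_gt0.
- by exfalso; nra.
- have c_lt0 : c < 0 by rewrite lt_neqAle c_neq0.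
  by rewrite !ltr0_norm //; lra.
Qed.

Lemma psum_delta (R : realType) (X : normedModType R) (e : nat -> X) m N :
  psum (fun k => (k == m)%:R) e N = if (m < N)%N then e m else 0.
Proof.
elim: N => [|N IH]; first by rewrite /psum big_geq.
rewrite /psum big_nat_recr //= -/(psum _ e N) IH.
case: (ltngtP m N) => [lt_mN|lt_Nm|->].
- by rewrite (ltn_trans lt_mN (ltnSn N)) scale0r addr0.
- by rewrite ltnS leqNgt lt_Nm scale0r addr0.
- by rewrite ltnSn scale1r add0r.
Qed.

Lemma psum_splice (R : realType) (X : normedModType R) (e : nat -> X)
    (a a0 : nat -> R) (N M : nat) : (N <= M)%N ->
  psum (fun k => if (k < N)%N then a k else a0 k) e M =
  psum a e N + (psum a0 e M - psum a0 e N).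
Proof.
move=> le_NM; rewrite /psum !(big_cat_nat (leq0n N) le_NM) /=.
rewrite [X in _ = _ + X]addrC addKr; congr (_ + _).
- by apply: eq_big_nat => i /andP[_ ->].
- by apply: eq_big_nat => i /andP[le_Ni _]; rewrite ltnNge le_Ni.
Qed.

Definition splice {R : realType} {X : normedModType R} (e : nat -> X)
    (estar : nat -> X -> R) (x x0 : X) (N : nat) : X :=
  psum (estar^~ x) e N + (x0 - psum (estar^~ x0) e N).

Definition saturated_from {R : realType} {X : normedModType R}
    (estar : nat -> X -> R) (eps : nat -> R) (N : nat) (y : X) :=
  forall n, (N <= n)%N -> `|estar n y| = eps n.

Section Brick.
Context {R : realType} {X : normedModType R}.
Context {e : nat -> X} {estar : nat -> X -> R} {eps : nat -> R}.
Hypotheses (e_basis : schauder_basis e)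
           (estar_coef : biorthogonal_functionals e estar).

Lemma coef_unique (b : nat -> R) (y : X) :
  psum b e @ \oo --> y -> forall n, estar n y = b n.
Proof.
move=> yE n; have [a [_ a_unique]] := e_basis y.
by rewrite -(a_unique _ yE) (a_unique _ (estar_coef y)).
Qed.

Lemma coefDZ (u v : X) (c : R) n :
  estar n (u + c *: v) = estar n u + c * estar n v.
Proof.
apply: (coef_unique (fun k => estar k u + c * estar k v)).
have -> : psum (fun k => estar k u + c * estar k v) e =
    fun N => psum (estar^~ u) e N + c *: psum (estar^~ v) e N.
  apply/funext => N; rewrite /psum scaler_sumr -big_split /=.
  by apply: eq_bigr => i _; rewrite scalerDl scalerA.
exact: cvgD (estar_coef u) (cvgZr (estar_coef v)).
Qed.

Lemma coef_basis n m : estar n (e m) = (n == m)%:R.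
Proof.
apply: (coef_unique (fun k => (k == m)%:R)).
have eventually_em : \forall N \near \oo,
    (fun _ => e m) N = psum (fun k => (k == m)%:R) e N.
  by exists m.+1 => // N /= lt_mN; rewrite psum_delta lt_mN.
exact: cvg_trans (near_eq_cvg eventually_em) (cvg_cst _).
Qed.

Lemma coef_add_basis (y : X) c N n :
  estar n (y + c *: e N) = if n == N then estar n y + c else estar n y.
Proof.
by rewrite coefDZ coef_basis; case: (n == N); rewrite ?mulr1 ?mulr0 ?addr0.
Qed.

Lemma psum0 : psum (fun _ => 0) e = fun _ => 0.
Proof. by apply/funext => N; rewrite /psum big1 // => i _; rewrite scale0r. Qed.

Lemma coef0 n : estar n 0 = 0.
Proof. by apply: (coef_unique (fun _ => 0)); rewrite psum0; exact: cvg_cst. Qed.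

Lemma coef_eq0 (z : X) : (forall n, estar n z = 0) -> z = 0.
Proof.
move=> z_coef0; have := estar_coef z.
have -> : psum (estar^~ z) e = psum (fun _ => 0) e by congr psum; apply/funext.
by rewrite psum0 => /cvg_lim <- //; rewrite lim_cst.
Qed.

Lemma basis_neq0 n : e n != 0.
Proof.
by apply/eqP => en0; have := coef_basis n n; rewrite eqxx en0 coef0 => /eqP;
  rewrite eq_sym oner_eq0.
Qed.

Lemma coef_splice x x0 N n :
  estar n (splice e estar x x0 N) =
  if (n < N)%N then estar n x else estar n x0.
Proof.
apply: (coef_unique (fun k => if (k < N)%N then estar k x else estar k x0)).
have eventually_splice : \forall M \near \oo,
    (fun M => psum (estar^~ x) e N + (psum (estar^~ x0) e M
       - psum (estar^~ x0) e N)) M =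
    psum (fun k => if (k < N)%N then estar k x else estar k x0) e M.
  by exists N => // M /= le_NM; rewrite psum_splice.
apply: cvg_trans (near_eq_cvg eventually_splice) _.
exact: cvgD (cvg_cst _) (cvgB (estar_coef x0) (cvg_cst _)).
Qed.

Lemma splice_cvg x x0 : splice e estar x x0 @ \oo --> x.
Proof.
have := cvgD (estar_coef x) (cvgB (cvg_cst x0) (estar_coef x0)).
by rewrite subrr addr0; apply.
Qed.

Local Notation K := (brick estar eps).

Lemma extreme_point_brick_saturated y :
  extreme_point K y -> saturated_from estar eps 0 y.
Proof.
move=> [Ky y_ext] n _; apply/eqP; rewrite eq_le Ky leNgt; apply/negP => lt_n.
set d := eps n - `|estar n y|.
have d_gt0 : 0 < d by rewrite subr_gt0.
have [|l /andP[l_ge l_le]] := y_ext (d *: e n).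
  by rewrite scaler_eq0 negb_or gt_eqF // basis_neq0.
apply=> m; rewrite scalerA coef_add_basis; case: eqP => [->|_]; last exact: Ky.
rewrite (le_trans (ler_normD _ _)) // normrM (gtr0_norm d_gt0).
have : `|l| <= 1 by rewrite ler_norml l_ge l_le.
by rewrite /d; nra.
Qed.

Lemma saturated_extreme_point y :
  saturated_from estar eps 0 y -> extreme_point K y.
Proof.
move=> y_sat; split=> [n|z z_neq0]; first by rewrite y_sat.
have [n coef_z] : exists n, estar n z != 0.
  apply: contrapT => all_coef0; move/eqP: z_neq0; apply.
  apply: coef_eq0 => n.
  by apply/eqP/negPn/negP => coef_z; apply: all_coef0; exists n.
exists (if 0 <= estar n y * estar n z then 1 else -1).
  by case: ifP => _; rewrite ?lexx ?ler_n1 //=; lra.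
move=> /(_ n); rewrite coefDZ -(y_sat n) // leNgt; apply/negP/negPn.
apply: normr_lt_add_same_sign.
- case: ifP => [|/negbT]; rewrite ?mul1r // -ltNge mulN1r mulrN oppr_ge0.
  exact: ltW.
- by case: ifP => _; rewrite ?mul1r // mulN1r oppr_eq0.
Qed.

Lemma brick_move_coord N y c : K y -> saturated_from estar eps N.+1 y ->
    `|estar N y + c| = eps N ->
  K (y + c *: e N) /\ saturated_from estar eps N (y + c *: e N).
Proof.
move=> Ky y_sat coordN; split=> [n|n le_Nn]; rewrite coef_add_basis.
  by case: eqP => [->|_]; [rewrite coordN | exact: Ky].
case: eqP => [->|/eqP neq_nN]; first by rewrite coordN.
by apply: y_sat; rewrite ltn_neqAle eq_sym neq_nN le_Nn.
Qed.

Lemma brick_norm_le_saturated_from (r : R) :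
    (forall y, saturated_from estar eps 0 y -> `|y| <= r) ->
  forall N y, K y -> saturated_from estar eps N y -> `|y| <= r.
Proof.
move=> sat_le; elim=> [|N IH] y Ky y_sat; first exact: sat_le.
set a := estar N y; set s := eps N.
have norm_a_le : `|a| <= s := Ky N.
have [s0|s_neq0] := eqVneq s 0.
  apply: IH => // n; rewrite leq_eqVlt => /orP[/eqP <-|]; last exact: y_sat.
  by apply/eqP; rewrite -/a -/s eq_le norm_a_le s0 normr_ge0.
have s_gt0 : 0 < s by rewrite lt0r s_neq0 (le_trans (normr_ge0 _) norm_a_le).
have [a_ge a_le] : -s <= a /\ a <= s.
  by move: norm_a_le; rewrite ler_norml => /andP[].
have [K1 sat1] := brick_move_coord N y (s - a) Ky y_sat
  ltac:(by rewrite addrC subrK gtr0_norm).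
have [K2 sat2] := brick_move_coord N y (- s - a) Ky y_sat
  ltac:(by rewrite addrC subrK normrN gtr0_norm).
have yE : (a + s + (s - a)) *: y =
    (a + s) *: (y + (s - a) *: e N) + (s - a) *: (y + (- s - a) *: e N).
  rewrite !scalerDr !scalerA [RHS]addrACA -!scalerDl.
  have -> : (a + s) * (s - a) + (s - a) * (- s - a) = 0 by ring.
  by rewrite scale0r addr0.
by apply: (normr_convex_le _ _ _ yE (IH _ K1 sat1) (IH _ K2 sat2)); lra.
Qed.

Lemma brick_norm_le (r : R) x0 : saturated_from estar eps 0 x0 ->
    (forall y, saturated_from estar eps 0 y -> `|y| <= r) ->
  forall x, K x -> `|x| <= r.
Proof.
move=> x0_sat sat_le x Kx.
have splice_le N : `|splice e estar x x0 N| <= r.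
  apply: (@brick_norm_le_saturated_from r sat_le N).
    move=> n; rewrite coef_splice.
    by case: ifP => _; [exact: Kx | rewrite x0_sat].
  by move=> n le_Nn; rewrite coef_splice ltnNge le_Nn x0_sat.
have norm_cvg : `|splice e estar x x0 N| @[N --> \oo] --> `|x|.
  exact: cvg_norm (splice_cvg x x0).
rewrite -(cvg_lim _ norm_cvg) //; apply: limr_le; last exact: nearW.
by apply/cvg_ex; exists `|x|.
Qed.

End Brick.

Lemma ext_radius_ub {R : realType} {X : normedModType R} {A : set X} {y : X} :
  extreme_point A y -> ((`|y|)%:E <= ext_radius A)%E.
Proof.
move=> y_ext; rewrite /ext_radius; case: pselect => ?; last by rewrite leey.
by apply: ereal_sup_ubound; exists y.
Qed.

Lemma ext_radius_fin {R : realType} {X : normedModType R} {A : set X} :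
  (ext_radius A < +oo)%E ->
  (exists x0, extreme_point A x0) /\ exists r : R, ext_radius A = r%:E.
Proof.
move=> fin; have ext_ex : exists x0, extreme_point A x0.
  by move: fin; rewrite /ext_radius; case: pselect => //; rewrite ltxx.
split=> //; have [x0 x0_ext] := ext_ex.
case rE: (ext_radius A) => [r| |]; first by exists r.
- by move: fin; rewrite rE ltxx.
- by have := ext_radius_ub x0_ext; rewrite rE leeNy_eq.
Qed.

Theorem lemma3p3 (R : realType) (X : completeNormedModType R)
  (e : nat -> X) (estar : nat -> X -> R) (eps : nat -> R) :
  schauder_basis e -> normalized e -> biorthogonal_functionals e estar ->
  (forall n, 0 <= eps n) ->
  (ext_radius (brick estar eps) < +oo)%E ->
  forall x, brick estar eps x -> ((`|x|)%:E <= ext_radius (brick estar eps))%E.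
Proof.
move=> e_basis _ estar_coef _ fin x Kx.
have [[x0 x0_ext] [r rE]] := ext_radius_fin fin.
have ext_le y : extreme_point (brick estar eps) y -> `|y| <= r.
  by rewrite -lee_fin -rE; exact: ext_radius_ub.
have x0_sat := extreme_point_brick_saturated e_basis estar_coef _ x0_ext.
rewrite rE lee_fin; apply: (brick_norm_le e_basis estar_coef _ _ x0_sat _ _ Kx).
by move=> y /(saturated_extreme_point e_basis estar_coef) /ext_le.
Qed.
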